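(* Let $l$ be a positive integer, $\epsilon\in(0,1)$, $\theta\in[0,1)$, and let $N$ be a positive integer with $N\ge 5.34\ln(4l/\epsilon)$. For $k=1,\dots,l$ let $N_{x,k}\sim\mathrm{Bin}\big(N,(1+\cos(2\pi 2^{k-1}\theta))/2\big)$ and $N_{y,k}\sim\mathrm{Bin}\big(N,(1+\sin(2\pi 2^{k-1}\theta))/2\big)$, all $2l$ variables independent. Put $t_k=\frac{1}{2\pi}\big(\mathrm{atan2}(2N_{y,k}/N-1,2N_{x,k}/N-1)\big)_{\mathrm{mod}\,2\pi}$ and $x(k)=(t_k-1/6)_{\mathrm{mod}\,1}$. Define $z(1)=x(1)$ and, for $k=1,\dots,l-1$, with $d_k=(x(k+1)-2z(k))_{\mathrm{mod}\,1}$: $z(k+1)=2z(k)+d_k$ if $d_k\in[0,1/3)$, $z(k+1)=2z(k)+1/3$ if $d_k\in[1/3,2/3)$, $z(k+1)=2z(k)$ if $d_k\in[2/3,1)$. Then with probability at least $1-\epsilon$, $\theta$ lies in the arc $\big[z(l)/2^{l-1},(z(l)+1/3)/2^{l-1}\big]$ on the circle of unit circumference (length $1/(3\cdot2^{l-1})$); in particular $\hat\theta=\big((z(l)+1/6)/2^{l-1}\big)_{\mathrm{mod}\,1}$ satisfies $\Pr\big(|\hat\theta-\theta|_1\le 1/(3\cdot 2^l)\big)\ge 1-\epsilon$.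
   Context: This models iterative phase estimation of $U_\theta=\mathrm{diag}(1,e^{i2\pi\theta})$ using a single qubit: at stage $k$, $U_\theta$ is applied $2^{k-1}$ times to $|\psi_x\rangle=(|0\rangle+|1\rangle)/\sqrt2$, and the result is measured $N$ times with $\{|\psi_x\rangle\langle\psi_x|,\mathbb{I}-|\psi_x\rangle\langle\psi_x|\}$ and $N$ times with $\{|\psi_y\rangle\langle\psi_y|,\mathbb{I}-|\psi_y\rangle\langle\psi_y|\}$, $|\psi_y\rangle=(|0\rangle+i|1\rangle)/\sqrt2$; $N_{x,k},N_{y,k}$ count outcomes $1$. $(a)_{\mathrm{mod}\,c}$ is the representative of $a$ in $[0,c)$; an arc $[a,b]$ with $b-a<1$ is $\{t_{\mathrm{mod}\,1}:t\in[a,b]\}$; $|\hat\theta-\theta|_1=\min((\hat\theta-\theta)_{\mathrm{mod}\,1},(\theta-\hat\theta)_{\mathrm{mod}\,1})$; $\mathrm{atan2}$ is the polar angle (any fixed convention at $(0,0)$). *)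

From HB Require Import structures.
From mathcomp Require Import all_boot all_order all_algebra.
From mathcomp Require Import boolp classical_sets reals exp trigo.
Set Implicit Arguments. Unset Strict Implicit. Unset Printing Implicit Defensive.
Import Order.TTheory GRing.Theory Num.Theory.
Local Open Scope ring_scope.

Section Defs.
Variable R : realType.

Definition modr (a c : R) : R := a - c * (Num.floor (a / c))%:~R.

(* polar angle of (x, y), in (-pi, pi]; convention atan2 0 0 = 0 *)
Definition atan2 (y x : R) : R :=
  if 0 < x then atan (y / x)
  else if x < 0 then (if 0 <= y then atan (y / x) + pi else atan (y / x) - pi)
  else if 0 < y then pi / 2
  else if y < 0 then - (pi / 2)
  else 0.

(* theta in the arc [a,b] (b - a < 1) of the circle of unit circumference *)
Definition in_arc (a b theta : R) : Prop :=
  exists t : R, a <= t <= b /\ modr t 1 = theta.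

Definition dist1 (u v : R) : R := Num.min (modr (u - v) 1) (modr (v - u) 1).

Definition binom_pmf (N : nat) (p : R) (j : nat) : R :=
  ('C(N, j))%:R * p ^+ j * (1 - p) ^+ (N - j).

Definition tval (N nx ny : nat) : R :=
  modr (atan2 (2 * ny%:R / N%:R - 1) (2 * nx%:R / N%:R - 1)) (2 * pi) / (2 * pi).

(* x(k+1) in 0-based indexing: stage k+1 of the paper *)
Definition xval (N : nat) (nx ny : nat -> nat) (k : nat) : R :=
  modr (tval N (nx k) (ny k) - 1 / 6) 1.

(* zval k = z(k+1) of the paper *)
Fixpoint zval (N : nat) (nx ny : nat -> nat) (k : nat) : R :=
  match k with
  | 0 => xval N nx ny 0
  | k'.+1 =>
      let z := zval N nx ny k' in
      let d := modr (xval N nx ny k - 2 * z) 1 in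
      if d < 1 / 3 then 2 * z + d
      else if d < 2 / 3 then 2 * z + 1 / 3
      else 2 * z
  end.

(* sample space: the outcomes (N_{x,k}, N_{y,k}) for k = 1..l (0-based index) *)
Definition outcome (l N : nat) := {ffun 'I_l -> 'I_N.+1 * 'I_N.+1}.

Definition cnt_x (l N : nat) (w : outcome l N) (k : nat) : nat :=
  odflt 0%N (omap (fun i : 'I_l => nat_of_ord (w i).1) (insub k)).
Definition cnt_y (l N : nat) (w : outcome l N) (k : nat) : nat :=
  odflt 0%N (omap (fun i : 'I_l => nat_of_ord (w i).2) (insub k)).

Definition joint_pmf (l N : nat) (theta : R) (w : outcome l N) : R :=
  \prod_(i < l)
    (binom_pmf N ((1 + cos (2 * pi * 2 ^+ i * theta)) / 2) (w i).1 *
     binom_pmf N ((1 + sin (2 * pi * 2 ^+ i * theta)) / 2) (w i).2).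

Definition prob (l N : nat) (theta : R) (E : outcome l N -> Prop) : R :=
  \sum_(w : outcome l N | `[< E w >]) joint_pmf theta w.

Definition zfinal (l N : nat) (w : outcome l N) : R :=
  zval N (cnt_x w) (cnt_y w) l.-1.

Definition theta_hat (l N : nat) (w : outcome l N) : R :=
  modr ((zfinal w + 1 / 6) / 2 ^+ l.-1) 1.

End Defs.
Arguments zfinal {R l N} w.
Arguments theta_hat {R l N} w.

(* Each stage measures the point [(cos, sin)] of the angle [2 pi 2^k theta] by
   two binomial frequencies. By Hoeffding's inequality both frequencies are
   within [d] of their means except with probability [4 exp (- 2 N d^2)], and
   with [d^2 = 25/267] the union bound over the [l] stages costs at most [eps].
   On the complementary event the measured point is within [sqrt 3 / 2] of the
   true one, so [atan2] recovers [2^k theta] to within [1/6] turn and [x(k)]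
   lags it by an amount in [(0, 1/3)] modulo 1. An induction on the recursion
   then shows that some lift [t] of [theta] satisfies
   [z(k) <= 2^(k-1) t <= z(k) + 1/3], which gives the arc and the estimate. *)

From HB Require Import structures.
From mathcomp Require Import all_boot all_order all_algebra.
From mathcomp Require Import boolp classical_sets functions reals exp trigo.
From mathcomp Require Import topology normedtype sequences derive realfun.
From mathcomp Require Import ring lra.
Import Order.TTheory GRing.Theory Num.Theory numFieldNormedType.Exports.
Local Open Scope ring_scope.
Set Implicit Arguments. Unset Strict Implicit. Unset Printing Implicit Defensive.

Section FiniteSums.
Variable R : realType.

Lemma ler_sum_cover (I T : finType) (A : pred T) (P : I -> pred T) (f : T -> R) :
  (forall t, 0 <= f t) -> (forall t, A t -> [exists i, P i t]) ->
  \sum_(t | A t) f t <= \sum_i \sum_(t | P i t) f t.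
Proof.
move=> f0 cover; rewrite (exchange_big_dep xpredT) //= big_mkcond /=.
apply: ler_sum => t _; case: ifP => [/cover/existsP[i Pit]|_]; last exact: sumr_ge0.
by rewrite (bigD1 i) //= lerDl sumr_ge0.
Qed.

Lemma ler_sum_predU (T : finType) (A P Q : pred T) (f : T -> R) :
  (forall t, A t -> P t || Q t) -> (forall t, 0 <= f t) ->
  \sum_(t | A t) f t <= \sum_(t | P t) f t + \sum_(t | Q t) f t.
Proof.
move=> cover f0.
have -> : \sum_(t | P t) f t + \sum_(t | Q t) f t =
    \sum_(b : bool) \sum_(t | if b then P t else Q t) f t by rewrite big_bool.
apply: ler_sum_cover => // t /cover.
by case/orP => ?; apply/existsP; [exists true | exists false].
Qed.

Lemma sum_pair_fst (T1 T2 : finType) (G : T1 -> R) (H : T2 -> R) (A : pred T1) :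
  \sum_t H t = 1 ->
  \sum_(t : T1 * T2 | A t.1) G t.1 * H t.2 = \sum_(a | A a) G a.
Proof.
move=> H1.
rewrite (eq_bigl (fun t : T1 * T2 => A t.1 && xpredT t.2)) => [|t]; last by rewrite andbT.
rewrite -(pair_big A xpredT (fun a b => G a * H b)).
by apply: eq_bigr => a _; rewrite -big_distrr /= H1 mulr1.
Qed.

Lemma sum_pair_snd (T1 T2 : finType) (G : T1 -> R) (H : T2 -> R) (B : pred T2) :
  \sum_t G t = 1 ->
  \sum_(t : T1 * T2 | B t.2) G t.1 * H t.2 = \sum_(b | B b) H b.
Proof.
move=> G1; rewrite (eq_bigl (fun t : T1 * T2 => xpredT t.1 && B t.2)) //.
rewrite -(pair_big xpredT B (fun a b => G a * H b)) exchange_big.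
by apply: eq_bigr => b _; rewrite -big_distrl /= G1 mul1r.
Qed.

Section ProductPmf.
Variables (l : nat) (T : finType) (F : 'I_l -> T -> R).
Hypotheses (F_ge0 : forall i t, 0 <= F i t) (F_sum1 : forall i, \sum_t F i t = 1).

Lemma sum_prod_pmf : \sum_(w : {ffun 'I_l -> T}) \prod_i F i (w i) = 1.
Proof. by rewrite -bigA_distr_bigA /=; apply: big1 => i _; exact: F_sum1. Qed.

Lemma prod_pmf_marginal (A : pred T) (i0 : 'I_l) :
  \sum_(w : {ffun 'I_l -> T} | A (w i0)) \prod_i F i (w i) = \sum_(t | A t) F i0 t.
Proof.
pose Q i := [pred t | (i != i0) || A t].
have others : \prod_(i | i != i0) \sum_(t | Q i t) F i t = 1.
  apply: big1 => i ni0; rewrite -[RHS](F_sum1 i).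
  by apply: eq_bigl => t; rewrite /Q /= ni0.
have distr : \prod_i \sum_(t | Q i t) F i t =
    \sum_(w in family Q) \prod_i F i (w i) by apply: bigA_distr_big_dep.
rewrite (bigD1 i0) //= others mulr1 (eq_bigl A) in distr => [|t]; last first.
  by rewrite /Q /= eqxx.
rewrite distr; apply: eq_bigl => w.
apply/idP/familyP => [Aw i|/(_ i0)]; last by rewrite inE /Q /= eqxx.
by rewrite inE /Q /=; case: eqVneq => [->|].
Qed.

Lemma prod_pmf_union_bound (bad : 'I_l -> pred T) (E : {ffun 'I_l -> T} -> Prop) :
  (forall w : {ffun 'I_l -> T}, (forall i, ~~ bad i (w i)) -> E w) ->
  1 - \sum_i \sum_(t | bad i t) F i t
    <= \sum_(w : {ffun 'I_l -> T} | `[< E w >]) \prod_i F i (w i).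
Proof.
move=> good; rewrite -{1}sum_prod_pmf (bigID (fun w => `[< E w >])) /=.
rewrite -addrA gerDl subr_le0.
under [X in _ <= X]eq_bigr => i _ do rewrite -(prod_pmf_marginal (bad i)).
apply: ler_sum_cover => [w|w /negP notE]; first exact: prodr_ge0.
apply/existsPn => allgood; apply/notE/asboolP/good => i; exact: allgood.
Qed.

End ProductPmf.

End FiniteSums.

Section Hoeffding.
Variable R : realType.

Lemma is_derive_le_slope (f df : R -> R) (a b M : R) : a <= b ->
  (forall x : R, is_derive x 1 f (df x)) -> (forall x, a <= x <= b -> df x <= M) ->
  f b - f a <= M * (b - a).
Proof.
move=> ab fdf dfM.
have fcont : {within `[a, b], continuous f}%classic.
  by apply: derivable_within_continuous => x _; case: (fdf x).
have [c + ->] := MVT_segment ab (fun x _ => fdf x) fcont.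
by rewrite in_itv /= => cab; rewrite ler_wpM2r ?subr_ge0 // dfM.
Qed.

Definition bernoulli_mgf (p y : R) : R := (1 - p) + p * expR y.

Lemma bernoulli_mgf_gt0 (p y : R) : 0 <= p <= 1 -> 0 < bernoulli_mgf p y.
Proof.
move=> /andP[p0 p1]; have := expR_gt0 y; rewrite /bernoulli_mgf.
have [->|pn0] := eqVneq p 0; first by rewrite mul0r subr0 addr0.
have : 0 < p * expR y by rewrite mulr_gt0 // ?expR_gt0 // lt0r pn0.
lra.
Qed.

Lemma is_derive_bernoulli_mgf (p y : R) :
  is_derive y (1 : R) (bernoulli_mgf p) (p * expR y).
Proof.
have := is_deriveD (is_derive_cst (1 - p) y 1) (is_deriveZ p (is_derive_expR y)).
by rewrite add0r.
Qed.

(* [(1 - p) - (1 - p) / mgf] is the mean of the exponentially tilted Bernoulli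
   variable minus [p]; its derivative is the tilted variance, at most [1/4]. *)
Lemma tilted_mean_le (p c : R) : 0 <= p <= 1 -> 0 <= c ->
  (1 - p) - (1 - p) / bernoulli_mgf p c <= c / 4.
Proof.
move=> hp c0; set f := fun y => (1 - p) - (1 - p) / bernoulli_mgf p y.
rewrite -/(f c).
have fdf (y : R) : is_derive y 1 f ((1 - p) * p * expR y / bernoulli_mgf p y ^+ 2).
  have m0 := bernoulli_mgf_gt0 y hp.
  have hinv := is_deriveV (lt0r_neq0 m0) (is_derive_bernoulli_mgf p y).
  have hf := is_deriveB (is_derive_cst (1 - p) y 1) (is_deriveZ (1 - p) hinv).
  have -> : f = cst (1 - p) - (1 - p) \*: (fun y => (bernoulli_mgf p y)^-1).
    by apply/funext.
  by apply: (is_derive_eq hf); rewrite /GRing.scale /=; field; rewrite gt_eqF.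
have f0 : f 0 = 0 by rewrite /f /bernoulli_mgf expR0 mulr1 subrK divr1 subrr.
have := is_derive_le_slope (M := 1 / 4) c0 fdf; rewrite f0 !subr0 mul1r [_ * c]mulrC.
apply=> x _; have m0 := bernoulli_mgf_gt0 x hp; move: hp => /andP[p0 p1].
rewrite ler_pdivrMr ?exprn_gt0 //.
have := sqr_ge0 (1 - p - p * expR x); rewrite /bernoulli_mgf; nra.
Qed.

(* [mgf y * exp (- (y p + y^2/8))] is nonincreasing: its derivative has the
   sign of [tilted mean - p - y/4]. *)
Lemma hoeffding_lemma (p lam : R) : 0 <= p <= 1 -> 0 <= lam ->
  bernoulli_mgf p lam <= expR (lam * p + lam ^+ 2 / 8).
Proof.
move=> hp l0; set g := fun y => - (y * p + y ^+ 2 / 8).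
set F := fun y => bernoulli_mgf p y * expR (g y).
have Fdf (y : R) : is_derive y 1 F
    (expR (g y) * (p * expR y - bernoulli_mgf p y * (p + y / 4))).
  pose g' : R -> R := - (p \*: id + (1 / 8) \*: ((@id R) ^+ 2)).
  have hg : is_derive y 1 g' (- (p *: 1 + (1 / 8) *: ((2%:R * y ^+ 1) *: 1))).
    by apply: is_deriveN; apply: is_deriveD; apply: is_deriveZ.
  have hF := is_deriveM (is_derive_bernoulli_mgf p y)
    (is_derive1_comp (is_derive_expR (g' y)) hg).
  have gE : g' = g.
    apply/funext => x; rewrite [LHS](_ : _ = - (p * x + 1 / 8 * (x * x))) //.
    by rewrite /g; field.
  rewrite gE in hF; apply: (is_derive_eq hF).
  by rewrite /GRing.scale /= !mulr1; field.
have F0 : F 0 = 1.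
  rewrite /F /g /bernoulli_mgf expR0 mulr1 subrK.
  by rewrite mul0r expr0n /= mul0r addr0 oppr0 expR0 mulr1.
have F_le1 : F lam <= 1.
  have := is_derive_le_slope (M := 0) l0 Fdf; rewrite mul0r subr_le0 F0.
  apply=> x /andP[x0 _]; apply: mulr_ge0_le0; first exact: expR_ge0.
  have := tilted_mean_le hp x0; have m0 := bernoulli_mgf_gt0 x hp.
  move/(ler_wpM2l (ltW m0)); rewrite mulrBr mulrCA divff ?gt_eqF // mulr1.
  by move: hp m0; rewrite /bernoulli_mgf => /andP[p0 p1] m0; nra.
by move: F_le1; rewrite /F /g expRN ler_pdivrMr ?expR_gt0 // mul1r.
Qed.

End Hoeffding.

Section BinomialTails.
Variables (R : realType) (N : nat) (p : R).
Hypothesis p01 : 0 <= p <= 1.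

Lemma binom_pmf_ge0 j : 0 <= binom_pmf N p j.
Proof.
by move: p01 => /andP[p0 p1]; rewrite /binom_pmf !mulr_ge0 ?exprn_ge0 ?subr_ge0.
Qed.

Lemma sum_binom_pmf : \sum_(j < N.+1) binom_pmf N p j = 1.
Proof.
rewrite -(expr1n _ N) -(subrK p 1) exprDn; apply: eq_bigr => j _.
by rewrite /binom_pmf -mulr_natl; ring.
Qed.

Lemma binom_pmf_rev (j : 'I_N.+1) :
  binom_pmf N p (rev_ord j) = binom_pmf N (1 - p) j.
Proof.
have jN : (j <= N)%N by rewrite -ltnS.
by rewrite /binom_pmf /= subnS subSn // subKn //= bin_sub // subKr mulrAC.
Qed.

(* Chernoff's bound with the exponent [4 d] and Hoeffding's lemma. *)
Lemma binom_upper_tail (d : R) : 0 <= d -> (0 < N)%N ->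
  \sum_(j < N.+1 | p + d <= j%:R / N%:R) binom_pmf N p j
    <= expR (- (2 * N%:R * d ^+ 2)).
Proof.
move=> d0 N0; have Nr : (0 : R) < N%:R by rewrite ltr0n.
set lam := 4 * d; set K := expR (- (lam * (N%:R * (p + d)))).
have markov : \sum_(j < N.+1 | p + d <= j%:R / N%:R) binom_pmf N p j <=
    \sum_(j < N.+1) binom_pmf N p j * (expR (lam * j%:R) * K).
  rewrite big_mkcond; apply: ler_sum => j _; case: ifP => [jd|_].
    rewrite -[leLHS]mulr1 ler_wpM2l ?binom_pmf_ge0 // /K -expRD -[leLHS]expR0 ler_expR.
    by move: jd; rewrite ler_pdivlMr // subr_ge0 => jd; rewrite ler_wpM2l // /lam; lra.
  by rewrite mulr_ge0 ?binom_pmf_ge0 // mulr_ge0 // expR_ge0.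
have mgf : \sum_(j < N.+1) binom_pmf N p j * (expR (lam * j%:R) * K) =
    K * bernoulli_mgf p lam ^+ N.
  rewrite exprDn big_distrr /=; apply: eq_bigr => j _.
  by rewrite /binom_pmf mulrC (mulrC lam) expRM_natl -mulr_natl exprMn; ring.
apply: (le_trans markov); rewrite mgf.
have l0 : 0 <= lam by rewrite /lam; lra.
have mgf_le : bernoulli_mgf p lam ^+ N <= expR (lam * p + lam ^+ 2 / 8) ^+ N.
  by rewrite lerXn2r ?nnegrE ?expR_ge0 ?hoeffding_lemma // ltW // bernoulli_mgf_gt0.
apply: le_trans (ler_wpM2l (expR_ge0 _) mgf_le) _.
rewrite -expRM_natl /K -expRD ler_expR /lam; lra.
Qed.

End BinomialTails.

Lemma binom_lower_tail (R : realType) N (p d : R) : 0 <= p <= 1 -> 0 <= d ->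
  (0 < N)%N ->
  \sum_(j < N.+1 | j%:R / N%:R <= p - d) binom_pmf N p j
    <= expR (- (2 * N%:R * d ^+ 2)).
Proof.
move=> p01 d0 N0; have Nr : (0 : R) < N%:R by rewrite ltr0n.
have q01 : 0 <= 1 - p <= 1 by move: p01 => /andP[? ?]; apply/andP; split; lra.
rewrite (reindex_inj rev_ord_inj) /=.
under eq_bigr => j _ do rewrite binom_pmf_rev.
rewrite (eq_bigl (fun j : 'I_N.+1 => (1 - p) + d <= j%:R / N%:R)) => [|j].
  exact: binom_upper_tail.
have jN : (j <= N)%N by rewrite -ltnS.
rewrite subnS subSn //= natrB // mulrBl divff ?gt_eqF //.
by apply/idP/idP => h; lra.
Qed.

Lemma binom_deviation (R : realType) N (p d : R) : 0 <= p <= 1 -> 0 <= d ->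
  (0 < N)%N ->
  \sum_(j < N.+1 | d <= `|j%:R / N%:R - p|) binom_pmf N p j
    <= 2 * expR (- (2 * N%:R * d ^+ 2)).
Proof.
move=> p01 d0 N0.
apply: le_trans (ler_sum_predU (P := fun j : 'I_N.+1 => p + d <= j%:R / N%:R)
  (Q := fun j : 'I_N.+1 => j%:R / N%:R <= p - d) _ _) _ => [j|j|].
- by rewrite ler_normr => /orP[] ?; apply/orP; [left | right]; lra.
- exact: binom_pmf_ge0.
- by have := binom_upper_tail p01 d0 N0; have := binom_lower_tail p01 d0 N0; lra.
Qed.

Lemma sum_binom_pair (R : realType) N (p q : R) :
  \sum_(t : 'I_N.+1 * 'I_N.+1) binom_pmf N p t.1 * binom_pmf N q t.2 = 1.
Proof.
pose Bp (j : 'I_N.+1) := binom_pmf N p j; pose Bq (j : 'I_N.+1) := binom_pmf N q j.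
by rewrite (sum_pair_fst Bp (H := Bq) xpredT) ?sum_binom_pmf.
Qed.

Lemma binom_pair_deviation (R : realType) N (p q d : R) :
  0 <= p <= 1 -> 0 <= q <= 1 -> 0 <= d -> (0 < N)%N ->
  \sum_(t : 'I_N.+1 * 'I_N.+1 |
         (d <= `|t.1%:R / N%:R - p|) || (d <= `|t.2%:R / N%:R - q|))
      binom_pmf N p t.1 * binom_pmf N q t.2
    <= 4 * expR (- (2 * N%:R * d ^+ 2)).
Proof.
move=> p01 q01 d0 N0.
apply: le_trans (ler_sum_predU
  (P := fun t : 'I_N.+1 * 'I_N.+1 => d <= `|t.1%:R / N%:R - p|)
  (Q := fun t : 'I_N.+1 * 'I_N.+1 => d <= `|t.2%:R / N%:R - q|) _ _) _ => [//|t|].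
  by rewrite mulr_ge0 ?binom_pmf_ge0.
pose Bp (j : 'I_N.+1) := binom_pmf N p j; pose Bq (j : 'I_N.+1) := binom_pmf N q j.
rewrite (sum_pair_fst Bp (H := Bq) (fun j => d <= `|j%:R / N%:R - p|)) ?sum_binom_pmf //.
rewrite (sum_pair_snd (G := Bp) Bq (fun j => d <= `|j%:R / N%:R - q|)) ?sum_binom_pmf //.
by have := binom_deviation p01 d0 N0; have := binom_deviation q01 d0 N0; lra.
Qed.

Section FractionalPart.
Variable R : realType.
Implicit Types a b c : R.

Lemma modr1E a : modr a 1 = a - (Num.floor a)%:~R.
Proof. by rewrite /modr divr1 mul1r. Qed.

Lemma modr1_itv a : 0 <= modr a 1 < 1.
Proof.
rewrite modr1E; have /andP[h1 h2] := floor_itv a.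
by rewrite intrD in h2; apply/andP; split; lra.
Qed.

Lemma modr1_decomp a : exists m : int, a = modr a 1 + m%:~R.
Proof. by exists (Num.floor a); rewrite modr1E subrK. Qed.

Lemma modr1_eq a b (m : int) : 0 <= b < 1 -> a = b + m%:~R -> modr a 1 = b.
Proof.
move=> /andP[b0 b1] ->; rewrite modr1E (@floor_def _ _ m) ?addrK //.
by rewrite intrD; apply/andP; split; lra.
Qed.

Lemma modr1_addz a (m : int) : modr (a + m%:~R) 1 = modr a 1.
Proof.
have [n an] := modr1_decomp a; apply: (@modr1_eq _ _ (n + m)); first exact: modr1_itv.
by rewrite {1}an intrD addrA.
Qed.

Lemma modr1_modDl a b : modr (modr a 1 + b) 1 = modr (a + b) 1.
Proof. by rewrite [modr a 1]modr1E addrAC -intrN modr1_addz. Qed.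

Lemma modr1_modBr a b : modr (a - modr b 1) 1 = modr (a - b) 1.
Proof. by rewrite [modr b 1]modr1E opprB addrCA addrC modr1_addz. Qed.

Lemma modr_divr a c : 0 < c -> modr a c / c = modr (a / c) 1.
Proof. by move=> c0; rewrite modr1E /modr mulrBl mulrAC divff ?mul1r ?gt_eqF. Qed.

Lemma modr1_small a : -1 <= a < 1 ->
  (0 <= a /\ modr a 1 = a) \/ (a < 0 /\ modr a 1 = a + 1).
Proof.
move=> /andP[a1 a2]; case: (lerP 0 a) => a0.
  by left; split=> //; apply: (modr1_eq (m := 0)); rewrite ?addr0 // a0.
right; split=> //; apply: (modr1_eq (m := -1)); last by rewrite intrN; lra.
by apply/andP; split; lra.
Qed.

End FractionalPart.

Section PhaseEstimate.
Variable R : realType.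

Lemma cosD2piz (x : R) (m : int) : cos (x + 2 * pi * m%:~R) = cos x.
Proof.
have cos_nat y n : cos (y + (pi *+ 2) *+ n) = cos y := periodicn (@cosD2pi R) n y.
have twopi n : 2 * pi * n%:R = (pi *+ 2) *+ n :> R.
  by rewrite -mulr_natl -mulr_natr; ring.
case: m => n; first by rewrite -(cos_nat x n) -twopi.
by rewrite NegzE intrN mulrN twopi -[in RHS](subrK ((pi *+ 2) *+ n.+1) x) cos_nat.
Qed.

Lemma cos_pi3 : cos (pi / 3) = 1 / 2 :> R.
Proof.
set t := pi / 3; have := pi_gt0 R => pi0.
have c0 : 0 < cos t by apply: cos_gt0_pihalf; apply/andP; split; rewrite /t; lra.
have e : cos pi = cos (t *+ 2 + t) by congr cos; rewrite /t; field.
rewrite cospi cosD cos_mulr2n sin_mulr2n in e.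
have := cos2Dsin2 t => h.
have : (cos t + 1) * (2 * cos t - 1) ^+ 2 = 0 by rewrite !expr2 in e h *; nra.
by move/eqP; rewrite mulf_eq0 expf_eq0 /= => /orP[] /eqP; lra.
Qed.

Lemma frac_turn_near0 (v : R) : 1 / 2 < cos (2 * pi * v) ->
  0 < modr (1 / 6 - v) 1 < 1 / 3.
Proof.
move=> cosv; have [m vm] := modr1_decomp v; have /andP[w0 w1] := modr1_itv v.
set w := modr v 1 in vm w0 w1.
have cosw : cos (pi / 3) < cos (2 * pi * w).
  by move: cosv; rewrite vm mulrDr cosD2piz cos_pi3.
have pi0 := pi_gt0 R.
have itv0 (u : R) : 0 <= u <= 1 / 2 -> 2 * pi * u \in `[0, pi].
  move=> /andP[u0 u1]; rewrite in_itv /=.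
  have := mulr_ge0 (ltW pi0) u0.
  have : 0 <= pi * (1 / 2 - u) by rewrite mulr_ge0 ?subr_ge0 // ltW.
  by move=> ? ?; apply/andP; split; lra.
have pi3 : pi / 3 \in `[0, pi :> R] by rewrite in_itv /=; apply/andP; split; lra.
have w_near0 : w < 1 / 6 \/ 5 / 6 < w.
  case: (lerP w (1 / 2)) => hw.
    by move: cosw; rewrite ltr_cos ?itv0 ?w0 // => ?; left; nra.
  have cos1w : cos (2 * pi * w) = cos (2 * pi * (1 - w)).
    rewrite -cosN (_ : - (2 * pi * w) = 2 * pi * (1 - w) + 2 * pi * (-1)%:~R).
      by rewrite cosD2piz.
    by rewrite intrN /=; ring.
  move: cosw; rewrite cos1w ltr_cos ?itv0 // => [?|]; first by right; nra.
  by apply/andP; split; lra.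
rewrite (_ : 1 / 6 - v = 1 / 6 - w + (- m)%:~R) ?modr1_addz.
  2: by rewrite vm intrN; lra.
have : -1 <= 1 / 6 - w < 1 by apply/andP; split; lra.
by case/modr1_small => -[? ->]; apply/andP; split; case: w_near0 => ?; lra.
Qed.

Lemma cos_atan_gt0 (u : R) : 0 < cos (atan u).
Proof. by rewrite cos_atan invr_gt0 sqrtr_gt0; have := sqr_ge0 u; lra. Qed.

Lemma sin_atan_cos (u : R) : sin (atan u) = u * cos (atan u).
Proof. by rewrite -{2}(atanK u) /tan divfK // lt0r_neq0 ?cos_atan_gt0. Qed.

Lemma cosBpi (a : R) : cos (a - pi) = - cos a.
Proof. by rewrite -[in RHS](subrK pi a) cosDpi opprK. Qed.

Lemma sinBpi (a : R) : sin (a - pi) = - sin a.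
Proof. by rewrite -[in RHS](subrK pi a) sinDpi opprK. Qed.

Lemma atan2_polar (X Y : R) : X <> 0 \/ Y <> 0 ->
  exists r, 0 < r /\ X = r * cos (atan2 Y X) /\ Y = r * sin (atan2 Y X).
Proof.
move=> XY0; have c0 := cos_atan_gt0 (Y / X); have sE := sin_atan_cos (Y / X).
set C := cos (atan (Y / X)) in c0 sE *.
have Cn : C != 0 by exact: lt0r_neq0.
rewrite /atan2.
case: (ltrP 0 X) => hX.
  exists (X / C); split; first by rewrite divr_gt0.
  by rewrite -/C sE; split; field; rewrite ?gt_eqF ?Cn.
case: (ltrP X 0) => hX2.
  have Xn : X != 0 by rewrite lt_eqF.
  case: (lerP 0 Y) => hY.
    exists (- X / C); split; first by rewrite divr_gt0 // oppr_gt0.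
    rewrite cosDpi sinDpi -/C sE; by split; field; rewrite ?Xn ?Cn.
  exists (- X / C); split; first by rewrite divr_gt0 // oppr_gt0.
  rewrite cosBpi sinBpi -/C sE; by split; field; rewrite ?Xn ?Cn.
have X0 : X = 0 by apply/eqP; rewrite eq_le hX hX2.
have Yn : Y <> 0 by case: XY0.
case: (ltrP 0 Y) => hY.
  by exists Y; rewrite cos_pihalf sin_pihalf mulr0 mulr1.
case: (ltrP Y 0) => hY2.
  exists (- Y).
  by rewrite cosN sinN cos_pihalf sin_pihalf mulr0 oppr_gt0 mulrN mulr1 opprK.
by exfalso; apply: Yn; apply/eqP; rewrite eq_le hY hY2.
Qed.

Lemma cos_atan2B_gt_half (X Y a : R) :
  (X - cos a) ^+ 2 + (Y - sin a) ^+ 2 < 3 / 4 -> 1 / 2 < cos (atan2 Y X - a).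
Proof.
set c := cos a; set s := sin a => near.
have cs1 : c ^+ 2 + s ^+ 2 = 1 by rewrite /c /s cos2Dsin2.
have XY0 : X <> 0 \/ Y <> 0.
  case: (eqVneq X 0) => [X0|]; last by left; apply/eqP.
  case: (eqVneq Y 0) => [Y0|]; last by right; apply/eqP.
  by exfalso; move: near; rewrite X0 Y0 !sub0r !sqrrN cs1; lra.
have [r [r0 [XE YE]]] := atan2_polar XY0; set b := atan2 Y X in XE YE *.
have csb : cos b ^+ 2 + sin b ^+ 2 = 1 by rewrite cos2Dsin2.
rewrite cosB -/c -/s.
(* With [U] the component of [(X, Y) - (c, s)] along [(c, s)], the projection
   [X c + Y s = 1 + U] dominates [r / 2] because [r^2 = 1 + 2 U + |(X, Y) - (c, s)|^2]. *)
set U := (X - c) * c + (Y - s) * s.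
have U2 : U ^+ 2 <= (X - c) ^+ 2 + (Y - s) ^+ 2.
  by have := sqr_ge0 ((X - c) * s - (Y - s) * c); rewrite /U; nra.
have proj : X * c + Y * s = 1 + U by rewrite /U; nra.
have U1 : 0 < 1 + U by nra.
have r2 : r ^+ 2 = 1 + 2 * U + ((X - c) ^+ 2 + (Y - s) ^+ 2).
  have : r ^+ 2 = X ^+ 2 + Y ^+ 2 by rewrite XE YE !exprMn -mulrDr csb mulr1.
  by move: cs1; rewrite /U !expr2; lra.
have r2lt : r ^+ 2 < (2 * (1 + U)) ^+ 2.
  by rewrite r2; have := sqr_ge0 (2 * U + 3 / 2); rewrite !expr2; lra.
have rlt : r < 2 * (1 + U).
  by case: (ltrP r (2 * (1 + U))) => // h; move: r2lt; rewrite !expr2; nra.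
by move: rlt; rewrite -proj XE YE; nra.
Qed.

(* Subtracting [1/6] turn from the measured angle converts an angular error of
   less than [1/6] turn into a lag in [(0, 1/3)]. *)
Lemma phase_estimate_arc (phi X Y : R) :
  (X - cos (2 * pi * phi)) ^+ 2 + (Y - sin (2 * pi * phi)) ^+ 2 < 3 / 4 ->
  0 < modr (phi - modr (modr (atan2 Y X) (2 * pi) / (2 * pi) - 1 / 6) 1) 1 < 1 / 3.
Proof.
move/cos_atan2B_gt_half; have pi2 : 0 < 2 * pi :> R by rewrite mulr_gt0 ?pi_gt0.
set v := atan2 Y X / (2 * pi) - phi.
have -> : atan2 Y X - 2 * pi * phi = 2 * pi * v.
  by rewrite /v mulrBr mulrCA divff ?mulr1 ?gt_eqF.
rewrite modr_divr // modr1_modDl modr1_modBr.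
by rewrite (_ : phi - _ = 1 / 6 - v); [exact: frac_turn_near0 | rewrite /v; ring].
Qed.

End PhaseEstimate.

Section ZRecursion.
Variable R : realType.

Definition z_update (z x : R) : R :=
  let d := modr (x - 2 * z) 1 in
  if d < 1 / 3 then 2 * z + d else if d < 2 / 3 then 2 * z + 1 / 3 else 2 * z.

Lemma zvalS N nx ny k :
  zval R N nx ny k.+1 = z_update (zval R N nx ny k) (xval R N nx ny k.+1).
Proof. by []. Qed.

Lemma z_update_tracks (z x S : R) :
  2 * z <= S <= 2 * z + 2 / 3 -> 0 < modr (S - x) 1 < 1 / 3 ->
  z_update z x <= S <= z_update z x + 1 / 3.
Proof.
move=> /andP[Sl Sr]; rewrite /z_update; set d := modr (x - 2 * z) 1.
have [m dm] := modr1_decomp (x - 2 * z); rewrite -/d in dm.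
have /andP[d0 d1] : 0 <= d < 1 by exact: modr1_itv.
have -> : S - x = (S - 2 * z - d) + (- m)%:~R by rewrite intrN; lra.
rewrite modr1_addz; have : -1 <= S - 2 * z - d < 1 by apply/andP; split; lra.
by case/modr1_small => -[_ ->] /andP[u0 u1];
  do 2?case: ifP => ?; apply/andP; split; lra.
Qed.

Lemma zval_tracks_phase N nx ny (th : R) k : 0 <= th < 1 ->
  (forall i, (i <= k)%N -> 0 < modr (2 ^+ i * th - xval R N nx ny i) 1 < 1 / 3) ->
  exists t, zval R N nx ny k <= 2 ^+ k * t <= zval R N nx ny k + 1 / 3 /\
            modr t 1 = th.
Proof.
move=> th01; elim: k => [|k IH] good.
  have /andP[g0 g1] := good 0%N isT; rewrite expr0 mul1r in g0 g1.
  have [n hn] := modr1_decomp (th - xval R N nx ny 0).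
  exists (th - n%:~R); rewrite expr0 mul1r /=; split; first by apply/andP; split; lra.
  by apply: (modr1_eq (m := - n)); rewrite ?intrN.
have [t [/andP[tl tr] tth]] := IH (fun i ik => good i (leqW ik)).
exists t; split => //; rewrite zvalS; apply: z_update_tracks.
  by rewrite exprS -mulrA; apply/andP; split; lra.
have [n tn] := modr1_decomp t; rewrite tth in tn.
have -> : 2 ^+ k.+1 * t - xval R N nx ny k.+1 =
    2 ^+ k.+1 * th - xval R N nx ny k.+1 + (2 ^+ k.+1 * n)%:~R.
  by rewrite intrM rmorphXn tn; ring.
by rewrite modr1_addz; exact: good.
Qed.

End ZRecursion.

Section Arcs.
Variable R : realType.

Lemma dist1_modr_le (h t e : R) : `|h - t| <= e -> e < 1 ->
  dist1 (modr h 1) (modr t 1) <= e.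
Proof.
move=> /ler_normlP[h1 h2] e1; rewrite /dist1 ge_min.
have [a ha] := modr1_decomp h; have [b hb] := modr1_decomp t.
case: (lerP 0 (h - t)) => s; apply/orP; [left | right].
  rewrite (modr1_eq (b := h - t) (m := b - a)) ?intrB;
    [lra | apply/andP; split; lra | lra].
rewrite (modr1_eq (b := t - h) (m := a - b)) ?intrB;
  [lra | apply/andP; split; lra | lra].
Qed.

Lemma tracked_arc (z t th : R) (n : nat) :
  z <= 2 ^+ n * t <= z + 1 / 3 -> modr t 1 = th ->
  in_arc (z / 2 ^+ n) ((z + 1 / 3) / 2 ^+ n) th /\
  dist1 (modr ((z + 1 / 6) / 2 ^+ n) 1) th <= 1 / (3 * 2 ^+ n.+1).
Proof.
move=> /andP[tl tr] tth; have P0 : (0 : R) < 2 ^+ n by rewrite exprn_gt0.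
split.
  exists t; split => //; apply/andP; split.
    by rewrite ler_pdivrMr // mulrC.
  by rewrite ler_pdivlMr // mulrC.
rewrite -tth; apply: dist1_modr_le; last first.
  rewrite ltr_pdivrMr ?mulr_gt0 ?exprn_gt0 // mul1r.
  have : (1 : R) <= 2 ^+ n.+1 by apply: exprn_ege1; lra.
  lra.
set P := (2 : R) ^+ n in P0 tl tr *.
have -> : (z + 1 / 6) / P - t = (z + 1 / 6 - P * t) / P by field; rewrite gt_eqF.
rewrite exprS -/P (_ : 1 / (3 * (2 * P)) = (1 / 6) / P); last by field; rewrite gt_eqF.
rewrite normrM normfV (ger0_norm (ltW P0)) ler_pM2r ?invr_gt0 //.
by rewrite ler_norml; apply/andP; split; lra.
Qed.

End Arcs.

Section GoodCounts.
Variables (R : realType) (l N : nat).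

Lemma cnt_xE (w : outcome l N) k (kl : (k < l)%N) : cnt_x w k = (w (Ordinal kl)).1.
Proof. by rewrite /cnt_x insubT. Qed.

Lemma cnt_yE (w : outcome l N) k (kl : (k < l)%N) : cnt_y w k = (w (Ordinal kl)).2.
Proof. by rewrite /cnt_y insubT. Qed.

Lemma count_dev_sqr_lt (n : nat) (a d : R) : (0 < N)%N ->
  `|n%:R / N%:R - (1 + a) / 2| < d -> (2 * n%:R / N%:R - 1 - a) ^+ 2 < 4 * d ^+ 2.
Proof.
move=> N0 /ltr_normlP[h1 h2].
have -> : 2 * n%:R / N%:R - 1 - a = 2 * (n%:R / N%:R - (1 + a) / 2).
  by rewrite -mulrA; field; rewrite pnatr_eq0 -lt0n.
by rewrite !expr2; nra.
Qed.

(* [8 d^2 < 3/4] keeps the measured point within distance [sqrt 3 / 2] of the unit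
   vector at angle [2 pi 2^k theta], hence within [pi / 3] of it in angle. *)
Lemma good_counts_locate_phase (th d : R) (w : outcome l N) :
  (0 < l)%N -> (0 < N)%N -> 0 <= th < 1 -> d ^+ 2 < 3 / 32 ->
  (forall k : 'I_l,
     `|((w k).1)%:R / N%:R - (1 + cos (2 * pi * 2 ^+ k * th)) / 2| < d /\
     `|((w k).2)%:R / N%:R - (1 + sin (2 * pi * 2 ^+ k * th)) / 2| < d) ->
  in_arc (zfinal w / 2 ^+ l.-1) ((zfinal w + 1 / 3) / 2 ^+ l.-1) th /\
  dist1 (theta_hat w) th <= 1 / (3 * 2 ^+ l).
Proof.
move=> l0 N0 th01 d2 close.
have stage_ok i : (i <= l.-1)%N ->
    0 < modr (2 ^+ i * th - xval R N (cnt_x w) (cnt_y w) i) 1 < 1 / 3.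
  move=> il; have kl : (i < l)%N by rewrite (leq_ltn_trans il) // prednK.
  have [cx cy] := close (Ordinal kl).
  rewrite /xval /tval (cnt_xE w kl) (cnt_yE w kl); apply: phase_estimate_arc.
  have := count_dev_sqr_lt N0 cx; have := count_dev_sqr_lt N0 cy.
  by rewrite /= !mulrA; lra.
have [t [zt tth]] := zval_tracks_phase th01 stage_ok.
by have := tracked_arc zt tth; rewrite prednK.
Qed.

End GoodCounts.

(* [2 * 25/267 * 5.34 = 1]; and [25/267] lies just below the bound [3/32] on [d^2]
   required by [good_counts_locate_phase]. *)
Lemma hoeffding_budget (R : realType) (l N : nat) (eps : R) :
  (0 < l)%N -> 0 < eps -> 534 / 100 * ln (4 * l%:R / eps) <= N%:R ->
  4 * l%:R * expR (- (2 * N%:R * (25 / 267))) <= eps.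
Proof.
move=> l0 eps0 hN; have lr : (0 : R) < l%:R by rewrite ltr0n.
have L0 : (0 : R) < 4 * l%:R / eps by rewrite divr_gt0 // mulr_gt0.
have : expR (- (2 * N%:R * (25 / 267))) <= (4 * l%:R / eps)^-1.
  rewrite -[in X in _ <= X^-1](lnK (x := 4 * l%:R / eps)) ?posrE //.
  by rewrite -expRN ler_expR; lra.
by rewrite invf_div ler_pdivlMr ?mulr_gt0 // mulrC.
Qed.
Lemma halfD1_itv (R : realType) (c : R) : -1 <= c <= 1 -> 0 <= (1 + c) / 2 <= 1.
Proof. by move=> /andP[c0 c1]; apply/andP; split; lra. Qed.

Lemma prob_stages_close (R : realType) (l N : nat) (theta d : R)
    (E : outcome l N -> Prop) : 0 <= d -> (0 < N)%N ->
  (forall w : outcome l N, (forall k : 'I_l,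
     `|((w k).1)%:R / N%:R - (1 + cos (2 * pi * 2 ^+ k * theta)) / 2| < d /\
     `|((w k).2)%:R / N%:R - (1 + sin (2 * pi * 2 ^+ k * theta)) / 2| < d) -> E w) ->
  1 - 4 * l%:R * expR (- (2 * N%:R * d ^+ 2)) <= prob theta E.
Proof.
move=> d0 N0 close.
pose px (k : 'I_l) : R := (1 + cos (2 * pi * 2 ^+ k * theta)) / 2.
pose py (k : 'I_l) : R := (1 + sin (2 * pi * 2 ^+ k * theta)) / 2.
have px01 k : 0 <= px k <= 1 by apply: halfD1_itv; rewrite cos_geN1 cos_le1.
have py01 k : 0 <= py k <= 1 by apply: halfD1_itv; rewrite sin_geN1 sin_le1.
pose F k (t : 'I_N.+1 * 'I_N.+1) := binom_pmf N (px k) t.1 * binom_pmf N (py k) t.2.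
have F_ge0 k t : 0 <= F k t by rewrite mulr_ge0 ?binom_pmf_ge0.
have F_sum1 k : \sum_t F k t = 1 by exact: sum_binom_pair.
pose bad k (t : 'I_N.+1 * 'I_N.+1) :=
  (d <= `|t.1%:R / N%:R - px k|) || (d <= `|t.2%:R / N%:R - py k|).
have union : 1 - \sum_k \sum_(t | bad k t) F k t <= prob theta E.
  apply: prod_pmf_union_bound => // w ok; apply: close => k.
  by have := ok k; rewrite negb_or -!ltNge => /andP.
apply: le_trans union; rewrite lerD2l lerN2.
apply: le_trans (ler_sum _ (fun k _ => binom_pair_deviation (px01 k) (py01 k) d0 N0)) _.
by rewrite sumr_const card_ord -[_ *+ l]mulr_natl mulrCA mulrA.
Qed.

Unset Implicit Arguments. Set Strict Implicit.

Theorem mainTheorem4 (R : realType) (l N : nat) (eps theta : R) :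
  (0 < l)%N -> 0 < eps < 1 -> 0 <= theta < 1 -> (0 < N)%N ->
  534 / 100 * ln (4 * l%:R / eps) <= N%:R ->
  1 - eps <=
    prob theta (fun w : outcome l N =>
      in_arc (zfinal w / 2 ^+ l.-1) ((zfinal w + 1 / 3) / 2 ^+ l.-1) theta)
  /\
  1 - eps <=
    prob theta (fun w : outcome l N =>
      dist1 (theta_hat w) theta <= 1 / (3 * 2 ^+ l)).
Proof.
move=> l0 /andP[eps0 _] th01 N0 hN.
pose d : R := Num.sqrt (25 / 267).
have d2 : d ^+ 2 = 25 / 267 by rewrite sqr_sqrtr //; lra.
have budget := hoeffding_budget l0 eps0 hN; rewrite -d2 in budget.
have d_small : d ^+ 2 < 3 / 32 by rewrite d2; lra.
have located w := good_counts_locate_phase (w := w) l0 N0 th01 d_small.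
split.
- apply: le_trans _ (prob_stages_close (sqrtr_ge0 _) N0 (fun w c => proj1 (located w c))).
  lra.
- apply: le_trans _ (prob_stages_close (sqrtr_ge0 _) N0 (fun w c => proj2 (located w c))).
  lra.
Qed.
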